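(* Let $\Sigma$ be a finite group and $A$ a pseudofield. The following are equivalent: (1) $A$ is difference closed; (2) for every $n$ and every $E\subseteq A\{y_1,\dots,y_n\}$, if $E$ has a common zero in $B^n$ for some pseudofield $B$ containing $A$, then $E$ has a common zero in $A^n$; (3) for every $n$, every $E\subseteq A\{y_1,\dots,y_n\}$ and every finite $W\subseteq A\{y_1,\dots,y_n\}$, if for some pseudofield $B$ containing $A$ there is a common zero $b\in B^n$ of $E$ with $w(b)\neq0$ for all $w\in W$, then there is a common zero $a\in A^n$ of $E$ with $w(a)\neq0$ for all $w\in W$.
   Context: A difference ring is a commutative ring with identity with an action of the group $\Sigma$ by ring automorphisms. A pseudofield is an absolutely flat difference ring with no $\Sigma$-stable ideals other than $0$ and itself; ''$B$ contains $A$'' means there is an injective difference homomorphism $A\to B$. The difference polynomial ring $A\{y_1,\dots,y_n\}$ is the polynomial ring over $A$ in the indeterminates $\sigma y_i$ ($\sigma\in\Sigma$), with $\Sigma$ acting on coefficients and by $\tau(\sigma y_i)=(\tau\sigma)y_i$; for $b\in B^n$, $f(b)$ is obtained by substituting $\sigma y_i\mapsto\sigma(b_i)$. A pseudofield $A$ is difference closed if for every $n$ and every $\Sigma$-stable ideal $\mathfrak a$ of $A\{y_1,\dots,y_n\}$ the radical of $\mathfrak a$ equals the set of difference polynomials vanishing at every common zero of $\mathfrak a$ in $A^n$. *)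

From HB Require Import structures.
From mathcomp Require Import all_boot all_order all_fingroup all_algebra.
Set Implicit Arguments. Unset Strict Implicit. Unset Printing Implicit Defensive.
Import GRing.Theory.
Local Open Scope ring_scope.

(* The difference group Sigma is the whole finite group gT. *)

(* An action of Sigma on a commutative ring R by ring automorphisms:
   each act g is a ring endomorphism (type {rmorphism R -> R}), and
   g |-> act g is a group action (hence each act g is an automorphism). *)
Definition is_diff_action (gT : finGroupType) (R : comNzRingType)
  (act : gT -> {rmorphism R -> R}) : Prop :=
  (forall a, act 1%g a = a) /\
  (forall g h a, act (g * h)%g a = act g (act h a)).

Definition ring_ideal (R : comNzRingType) (I : R -> Prop) : Prop :=
  I 0 /\ (forall x y, I x -> I y -> I (x + y)) /\
  (forall r x, I x -> I (r * x)).

Definition stable_ideal (gT : finGroupType) (R : comNzRingType)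
  (act : gT -> {rmorphism R -> R}) (I : R -> Prop) : Prop :=
  ring_ideal I /\ (forall g x, I x -> I (act g x)).

(* Absolutely flat = von Neumann regular (for commutative rings). *)
Definition absolutely_flat (R : comNzRingType) : Prop :=
  forall a : R, exists x : R, a = a * a * x.

Definition pseudofield (gT : finGroupType) (R : comNzRingType)
  (act : gT -> {rmorphism R -> R}) : Prop :=
  absolutely_flat R /\
  (forall I : R -> Prop, stable_ideal act I ->
     (forall x, I x -> x = 0) \/ (forall x, I x)).

(* Indeterminates sigma y_i are indexed by pairs (i, sigma) : 'I_n * gT.
   A monomial is an exponent vector; a difference polynomial is represented
   by a finite formal sum (list) of terms (coefficient, monomial); two lists
   represent the same polynomial iff they have the same coefficients (deq). *)
Definition monom (n : nat) (gT : finGroupType) := {ffun 'I_n * gT -> nat}.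
Definition dpoly (A : Type) (n : nat) (gT : finGroupType) :=
  seq (A * monom n gT).

Definition monom0 n gT : monom n gT := [ffun _ => 0%N].
Definition mmul n gT (m1 m2 : monom n gT) : monom n gT :=
  [ffun v => (m1 v + m2 v)%N].

Definition dcoef (A : nmodType) n gT (p : dpoly A n gT) (m : monom n gT) : A :=
  \sum_(t <- p | t.2 == m) t.1.

Definition deq (A : nmodType) n gT (p q : dpoly A n gT) : Prop :=
  forall m, dcoef p m = dcoef q m.

Definition dzero (A : Type) n gT : dpoly A n gT := [::].
Definition dadd (A : Type) n gT (p q : dpoly A n gT) : dpoly A n gT := p ++ q.
Definition dmul (A : comNzRingType) n gT (p q : dpoly A n gT) : dpoly A n gT :=
  [seq (t.1 * u.1, mmul t.2 u.2) | t <- p, u <- q].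
Definition done_ (A : comNzRingType) n gT : dpoly A n gT := [:: (1, monom0 n gT)].
Definition dexp (A : comNzRingType) n gT (p : dpoly A n gT) (k : nat) :
  dpoly A n gT := iter k (dmul p) (done_ A n gT).

(* Sigma-action on A{y}: on coefficients, and tau(sigma y_i) = (tau sigma) y_i;
   so the exponent of (i, rho) in tau(m) is the exponent of (i, tau^-1 rho) in m. *)
Definition dact (A : comNzRingType) n (gT : finGroupType)
  (actA : gT -> {rmorphism A -> A}) (g : gT) (p : dpoly A n gT) : dpoly A n gT :=
  map (fun t : A * monom n gT =>
         (actA g t.1, [ffun v : 'I_n * gT => t.2 (v.1, (g^-1 * v.2)%g)] : monom n gT)) p.

Definition deval (A : comNzRingType) (B : comNzRingType) n (gT : finGroupType)
  (phi : A -> B) (actB : gT -> {rmorphism B -> B}) (b : 'I_n -> B)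
  (p : dpoly A n gT) : B :=
  \sum_(t <- p) phi t.1 * \prod_(v : 'I_n * gT) (actB v.2 (b v.1)) ^+ (t.2 v).

Definition dpoly_ideal (A : comNzRingType) n gT (I : dpoly A n gT -> Prop) : Prop :=
  I (dzero A n gT) /\
  (forall p q, I p -> I q -> I (dadd p q)) /\
  (forall p q, I q -> I (dmul p q)) /\
  (forall p q, deq p q -> I p -> I q).

Definition dpoly_stable_ideal (A : comNzRingType) n (gT : finGroupType)
  (actA : gT -> {rmorphism A -> A}) (I : dpoly A n gT -> Prop) : Prop :=
  dpoly_ideal I /\ (forall g p, I p -> I (dact actA g p)).

Definition difference_closed (gT : finGroupType) (A : comNzRingType)
  (actA : gT -> {rmorphism A -> A}) : Prop :=
  forall (n : nat) (I : dpoly A n gT -> Prop), dpoly_stable_ideal actA I ->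
  forall f : dpoly A n gT,
    (exists k, I (dexp f k)) <->
    (forall a : 'I_n -> A,
       (forall g, I g -> deval id actA a g = 0) -> deval id actA a f = 0).

Definition contains (gT : finGroupType) (A B : comNzRingType)
  (actA : gT -> {rmorphism A -> A}) (actB : gT -> {rmorphism B -> B})
  (phi : {rmorphism A -> B}) : Prop :=
  injective phi /\ (forall g a, phi (actA g a) = actB g (phi a)).

From HB Require Import structures.
From mathcomp Require Import all_boot all_order all_fingroup all_algebra.
From mathcomp Require Import generic_quotient ring_quotient fraction.
From mathcomp Require Import boolp classical_sets.
Set Implicit Arguments. Unset Strict Implicit. Unset Printing Implicit Defensive.
Import GRing.Theory.
Local Open Scope ring_scope.
Local Open Scope quotient_scope.
Local Open Scope classical_set_scope.

(* We prove (1) => (2) => (3) => (1).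
   - (1) => (2): the zeros of a point b of an extension form a stable ideal;
     if it had no zero in A, the Nullstellensatz would put 1 in its radical.
   - (2) => (3): an inequation w <> 0 at a point of a pseudofield B is
     equivalent to the solvability of sum_s z_s * s(w) = 1 in new
     indeterminates z_s (the stable ideal generated by w(b) is B).
   - (3) => (1): one inclusion holds as A is reduced.  For the other, if no
     power of f lies in the stable ideal I, we build a pseudofield point
     separating I from f: a prime ideal of A{y} containing I and avoiding
     the powers of f (Zorn) gives a field K and a point in K; composing with
     the twisted embedding A -> K^Sigma yields a point in the pseudofield
     K^Sigma, which then descends to A by (3). *)

Section FormalArithmetic.
Variables (A : comNzRingType) (n : nat) (gT : finGroupType).
Local Notation M := (monom n gT).
Local Notation P := (dpoly A n gT).

Lemma dcoef_nil (m : M) : dcoef ([::] : P) m = 0.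
Proof. by rewrite /dcoef big_nil. Qed.

Lemma dcoef_cons (t : A * M) (p : P) m :
  dcoef (t :: p) m = (if t.2 == m then t.1 else 0) + dcoef p m.
Proof. by rewrite /dcoef big_cons; case: ifP; rewrite ?add0r. Qed.

Lemma dcoef_cat (p q : P) m : dcoef (p ++ q) m = dcoef p m + dcoef q m.
Proof. by rewrite /dcoef big_cat. Qed.

Lemma dcoefE (p : P) m :
  dcoef p m = \sum_(t <- p) (if t.2 == m then t.1 else 0).
Proof. by rewrite /dcoef big_mkcond. Qed.

Lemma sum_terms_by_monomial (V : nmodType) (F : A -> M -> V)
    (F0 : forall m, F 0 m = 0) (FD : forall x y m, F (x + y) m = F x m + F y m)
    (p : P) (s : seq M) :
  uniq s -> {subset map snd p <= s} ->
  \sum_(t <- p) F t.1 t.2 = \sum_(m <- s) F (dcoef p m) m.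
Proof.
move=> us; elim: p => [|t p IH] sub.
  by rewrite big_nil big1_seq //= => m _; rewrite dcoef_nil F0.
rewrite big_cons IH; last by move=> x hx; apply: sub; rewrite inE hx orbT.
under [RHS]eq_bigr => m _ do rewrite dcoef_cons FD.
rewrite big_split /=; congr (_ + _).
have ht : t.2 \in s by apply: sub; rewrite inE eqxx.
rewrite (bigD1_seq t.2) //= eqxx big1 ?addr0 // => m.
by rewrite eq_sym => /negbTE ->; apply: F0.
Qed.

Lemma deq_sum_terms (V : nmodType) (F : A -> M -> V)
    (F0 : forall m, F 0 m = 0) (FD : forall x y m, F (x + y) m = F x m + F y m)
    (p q : P) :
  deq p q -> \sum_(t <- p) F t.1 t.2 = \sum_(t <- q) F t.1 t.2.
Proof.
move=> pq; set s := undup (map snd (p ++ q)).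
have us : uniq s by apply: undup_uniq.
rewrite (@sum_terms_by_monomial _ F F0 FD p s us).
  rewrite (@sum_terms_by_monomial _ F F0 FD q s us).
    by apply: eq_bigr => m _; rewrite pq.
  by move=> x hx; rewrite mem_undup map_cat mem_cat hx orbT.
by move=> x hx; rewrite mem_undup map_cat mem_cat hx.
Qed.

Lemma mmulC (m1 m2 : M) : mmul m1 m2 = mmul m2 m1.
Proof. by apply/ffunP => v; rewrite !ffunE addnC. Qed.

Lemma mmulA (m1 m2 m3 : M) : mmul (mmul m1 m2) m3 = mmul m1 (mmul m2 m3).
Proof. by apply/ffunP => v; rewrite !ffunE addnA. Qed.

Lemma mmul0m (m : M) : mmul (monom0 n gT) m = m.
Proof. by apply/ffunP => v; rewrite !ffunE. Qed.

Lemma dcoef_mul (p q : P) m : dcoef (dmul p q) m =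
  \sum_(t <- p) \sum_(u <- q) (if mmul t.2 u.2 == m then t.1 * u.1 else 0).
Proof. by rewrite dcoefE /dmul big_allpairs_dep. Qed.

Definition dopp (p : P) : P := [seq (- t.1, t.2) | t <- p].

Lemma dcoef_opp (p : P) m : dcoef (dopp p) m = - dcoef p m.
Proof.
rewrite !dcoefE big_map -sumrN.
by apply: eq_bigr => t _ /=; case: ifP; rewrite ?oppr0.
Qed.

Lemma deq_sym (p q : P) : deq p q -> deq q p. Proof. by move=> h m. Qed.

Lemma deq_trans (p q r : P) : deq p q -> deq q r -> deq p r.
Proof. by move=> h1 h2 m; rewrite h1 h2. Qed.

Lemma deq_add (p p' q q' : P) : deq p p' -> deq q q' -> deq (dadd p q) (dadd p' q').
Proof. by move=> h1 h2 m; rewrite !dcoef_cat h1 h2. Qed.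

Lemma deq_opp (p p' : P) : deq p p' -> deq (dopp p) (dopp p').
Proof. by move=> h m; rewrite !dcoef_opp h. Qed.

Lemma dmulC (p q : P) : deq (dmul p q) (dmul q p).
Proof.
move=> m; rewrite !dcoef_mul exchange_big.
by apply: eq_bigr => u _; apply: eq_bigr => t _; rewrite mmulC mulrC.
Qed.

Lemma deq_mull (p p' q : P) : deq p p' -> deq (dmul p q) (dmul p' q).
Proof.
move=> h m; rewrite !dcoef_mul.
pose F (c : A) (m' : M) :=
  \sum_(u <- q) (if mmul m' u.2 == m then c * u.1 else 0).
apply: (@deq_sum_terms _ F) => //.
- by move=> m'; rewrite /F big1 // => u _; case: ifP; rewrite ?mul0r.
- move=> x y m'; rewrite /F -big_split; apply: eq_bigr => u _ /=.
  by case: ifP; rewrite ?addr0 ?mulrDl.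
Qed.

Lemma deq_mul (p p' q q' : P) : deq p p' -> deq q q' -> deq (dmul p q) (dmul p' q').
Proof.
move=> h1 h2; apply: deq_trans (deq_mull q h1) _.
apply: deq_trans (dmulC _ _) _; apply: deq_trans (deq_mull _ h2) _; exact: dmulC.
Qed.

Lemma dmulA (p q r : P) : deq (dmul p (dmul q r)) (dmul (dmul p q) r).
Proof.
move=> m; rewrite !dcoef_mul [in RHS]/dmul big_allpairs_dep /=.
apply: eq_bigr => t _; rewrite [in LHS]/dmul big_allpairs_dep /=.
by apply: eq_bigr => u _; apply: eq_bigr => w _; rewrite mmulA mulrA.
Qed.

Lemma dmul1 (p : P) : deq (dmul (done_ A n gT) p) p.
Proof.
move=> m; rewrite dcoef_mul big_cons big_nil addr0 dcoefE /=.
by apply: eq_bigr => u _; rewrite mmul0m mul1r.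
Qed.

Lemma dmulDl (p q r : P) : deq (dmul (dadd p q) r) (dadd (dmul p r) (dmul q r)).
Proof. by move=> m; rewrite dcoef_cat !dcoef_mul big_cat. Qed.

Lemma daddC (p q : P) : deq (dadd p q) (dadd q p).
Proof. by move=> m; rewrite !dcoef_cat addrC. Qed.

Lemma daddN (p : P) : deq (dadd (dopp p) p) (dzero A n gT).
Proof. by move=> m; rewrite dcoef_cat dcoef_opp addNr dcoef_nil. Qed.

Lemma done_neq0 : ~ deq (done_ A n gT) (dzero A n gT).
Proof.
move=> /(_ (monom0 n gT)); rewrite dcoef_nil dcoef_cons dcoef_nil eqxx addr0.
by move/eqP; rewrite oner_eq0.
Qed.

End FormalArithmetic.

Definition deqb (A : comNzRingType) n (gT : finGroupType) : rel (dpoly A n gT) :=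
  fun p q => `[< deq p q >].

Lemma deqb_equiv (A : comNzRingType) n (gT : finGroupType) :
  equiv_class_of (@deqb A n gT).
Proof.
split=> [p|p q|p q r]; rewrite /deqb.
- by apply/asboolP.
- by apply/asboolP/asboolP; apply: deq_sym.
- by move=> /asboolP h1 /asboolP h2; apply/asboolP; apply: deq_trans h1 h2.
Qed.

Canonical deqb_equivRel (A : comNzRingType) n (gT : finGroupType) :=
  EquivRelPack (@deqb_equiv A n gT).
Canonical deqb_encModRel (A : comNzRingType) n (gT : finGroupType) :=
  defaultEncModRel (@deqb A n gT).

Definition dring (A : comNzRingType) n (gT : finGroupType) := {eq_quot (@deqb A n gT)}.
HB.instance Definition _ (A : comNzRingType) n (gT : finGroupType) :
  EqQuotient (dpoly A n gT) (@deqb A n gT) (dring A n gT) := EqQuotient.on (dring A n gT).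
HB.instance Definition _ (A : comNzRingType) n (gT : finGroupType) :=
  Choice.on (dring A n gT).

Section DiffPolyRing.
Variables (A : comNzRingType) (n : nat) (gT : finGroupType).
Local Notation P := (dpoly A n gT).
Local Notation R := (dring A n gT).

Lemma piRP (p q : P) : \pi_R p = \pi_R q <-> deq p q.
Proof. by split=> [/eqquotP/asboolP | h]; last apply/eqquotP/asboolP. Qed.

Lemma repr_deq (p : P) : deq (repr (\pi_R p)) p.
Proof. by apply/piRP; rewrite reprK. Qed.

Definition rzero : R := \pi_R (dzero A n gT).
Definition rone : R := \pi_R (done_ A n gT).
Definition radd := locked (fun x y : R => \pi_R (dadd (repr x) (repr y)) : R).
Definition ropp := locked (fun x : R => \pi_R (dopp (repr x)) : R).
Definition rmul := locked (fun x y : R => \pi_R (dmul (repr x) (repr y)) : R).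

Lemma pi_radd (p q : P) : \pi_R (dadd p q) = radd (\pi_R p) (\pi_R q).
Proof. by rewrite /radd -lock; apply/piRP/deq_add; apply/deq_sym/repr_deq. Qed.

Lemma pi_ropp (p : P) : \pi_R (dopp p) = ropp (\pi_R p).
Proof. by rewrite /ropp -lock; apply/piRP/deq_opp/deq_sym/repr_deq. Qed.

Lemma pi_rmul (p q : P) : \pi_R (dmul p q) = rmul (\pi_R p) (\pi_R q).
Proof. by rewrite /rmul -lock; apply/piRP/deq_mul; apply/deq_sym/repr_deq. Qed.

Lemma raddA : associative radd.
Proof. by elim/quotW=> x; elim/quotW=> y; elim/quotW=> z; rewrite -!pi_radd /dadd catA. Qed.
Lemma raddC : commutative radd.
Proof. by elim/quotW=> x; elim/quotW=> y; rewrite -!pi_radd; apply/piRP/daddC. Qed.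
Lemma radd0 : left_id rzero radd.
Proof. by elim/quotW=> x; rewrite /rzero -pi_radd. Qed.
Lemma raddN : left_inverse rzero ropp radd.
Proof. by elim/quotW=> x; rewrite -pi_ropp -pi_radd; apply/piRP/daddN. Qed.

HB.instance Definition _ := GRing.isZmodule.Build R raddA raddC radd0 raddN.

Lemma rmulA : associative rmul.
Proof.
by elim/quotW=> x; elim/quotW=> y; elim/quotW=> z; rewrite -!pi_rmul; apply/piRP/dmulA.
Qed.
Lemma rmulC : commutative rmul.
Proof. by elim/quotW=> x; elim/quotW=> y; rewrite -!pi_rmul; apply/piRP/dmulC. Qed.
Lemma rmul1 : left_id rone rmul.
Proof. by elim/quotW=> x; rewrite /rone -pi_rmul; apply/piRP/dmul1. Qed.
Lemma rmulDl : left_distributive rmul radd.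
Proof.
elim/quotW=> x; elim/quotW=> y; elim/quotW=> z.
by rewrite -!pi_radd -!pi_rmul -pi_radd; apply/piRP/dmulDl.
Qed.
Lemma rone_neq0 : rone != rzero.
Proof. by apply/eqP => /piRP; apply: done_neq0. Qed.

HB.instance Definition _ :=
  GRing.Zmodule_isComNzRing.Build R rmulA rmulC rmul1 rmulDl rone_neq0.

Lemma pi_add (p q : P) : \pi_R (dadd p q) = \pi_R p + \pi_R q.
Proof. exact: pi_radd. Qed.
Lemma pi_mul (p q : P) : \pi_R (dmul p q) = \pi_R p * \pi_R q.
Proof. exact: pi_rmul. Qed.
Lemma pi_opp (p : P) : \pi_R (dopp p) = - \pi_R p.
Proof. exact: pi_ropp. Qed.
Lemma pi_exp (p : P) k : \pi_R (dexp p k) = \pi_R p ^+ k.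
Proof. by elim: k => [|k IH]; rewrite ?expr0 // exprS -IH /dexp iterS pi_mul. Qed.

End DiffPolyRing.

Section Evaluation.
Variables (A B : comNzRingType) (n : nat) (gT : finGroupType).
Variables (phi : {rmorphism A -> B}) (x : 'I_n * gT -> B).
Local Notation P := (dpoly A n gT).

Definition mev (m : monom n gT) : B := \prod_(v : 'I_n * gT) x v ^+ m v.
Definition peval (p : P) : B := \sum_(t <- p) phi t.1 * mev t.2.

Lemma mev_mul m1 m2 : mev (mmul m1 m2) = mev m1 * mev m2.
Proof. by rewrite /mev -big_split; apply: eq_bigr => v _; rewrite ffunE exprD. Qed.

Lemma mev0 : mev (monom0 n gT) = 1.
Proof. by rewrite /mev big1 // => v _; rewrite ffunE expr0. Qed.

Lemma peval0 : peval (dzero A n gT) = 0.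
Proof. by rewrite /peval big_nil. Qed.

Lemma peval_add (p q : P) : peval (dadd p q) = peval p + peval q.
Proof. by rewrite /peval /dadd big_cat. Qed.

Lemma peval_mul (p q : P) : peval (dmul p q) = peval p * peval q.
Proof.
rewrite /peval /dmul big_allpairs_dep big_distrl; apply: eq_bigr => t _ /=.
rewrite big_distrr; apply: eq_bigr => u _ /=.
by rewrite rmorphM mev_mul mulrACA.
Qed.

Lemma peval_single (c : A) (m : monom n gT) : peval [:: (c, m)] = phi c * mev m.
Proof. by rewrite /peval big_cons big_nil addr0. Qed.

Lemma peval_exp (p : P) k : peval (dexp p k) = peval p ^+ k.
Proof.
elim: k => [|k IH]; first by rewrite peval_single rmorph1 mev0 mulr1.
by rewrite exprS -IH /dexp iterS peval_mul.
Qed.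

Lemma peval_deq (p q : P) : deq p q -> peval p = peval q.
Proof.
apply: (@deq_sum_terms A n gT B (fun c m => phi c * mev m)) => [m|c d m].
  by rewrite rmorph0 mul0r.
by rewrite rmorphD mulrDl.
Qed.

Definition dsum (s : seq P) : P := foldr (@dadd A n gT) (dzero A n gT) s.

Lemma peval_dsum (s : seq P) : peval (dsum s) = \sum_(p <- s) peval p.
Proof.
by elim: s => [|p s IH]; rewrite ?big_nil ?peval0 //= peval_add IH big_cons.
Qed.

End Evaluation.

Lemma peval_comp (A B C : comNzRingType) n (gT : finGroupType)
    (rho : {rmorphism B -> C}) (phi : {rmorphism A -> B})
    (x : 'I_n * gT -> B) (q : dpoly A n gT) :
  rho (peval phi x q) = peval (rho \o phi)%FUN (rho \o x)%FUN q.
Proof.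
rewrite /peval rmorph_sum; apply: eq_bigr => t _.
rewrite rmorphM /mev rmorph_prod /=; congr (_ * _).
by apply: eq_bigr => v _; rewrite rmorphXn.
Qed.

Lemma devalE (A B : comNzRingType) n (gT : finGroupType) (phi : {rmorphism A -> B})
    (actB : gT -> {rmorphism B -> B}) (b : 'I_n -> B) (p : dpoly A n gT) :
  deval phi actB b p = peval phi (fun v => actB v.2 (b v.1)) p.
Proof. by []. Qed.

Lemma deval_idE (A : comNzRingType) n (gT : finGroupType)
    (actA : gT -> {rmorphism A -> A}) (a : 'I_n -> A) (p : dpoly A n gT) :
  deval id actA a p = deval (idfun : {rmorphism A -> A}) actA a p.
Proof. by []. Qed.

Lemma deval_dact (A B : comNzRingType) n (gT : finGroupType)
    (actA : gT -> {rmorphism A -> A}) (actB : gT -> {rmorphism B -> B})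
    (phi : {rmorphism A -> B}) (b : 'I_n -> B) (g : gT) (p : dpoly A n gT) :
  is_diff_action actB -> (forall g a, phi (actA g a) = actB g (phi a)) ->
  deval phi actB b (dact actA g p) = actB g (deval phi actB b p).
Proof.
move=> [_ actBM] phiE; rewrite /deval /dact big_map rmorph_sum.
apply: eq_bigr => t _ /=; rewrite rmorphM phiE; congr (_ * _).
rewrite rmorph_prod (reindex_inj (h := fun v : 'I_n * gT => (v.1, (g * v.2)%g))).
  by apply: eq_bigr => -[i s] _ /=; rewrite ffunE /= mulKg rmorphXn actBM.
by move=> [i s] [j r] /= [-> /mulgI ->].
Qed.

Lemma vanishing_ideal_stable (gT : finGroupType) (A B : comNzRingType)
    (actA : gT -> {rmorphism A -> A}) (actB : gT -> {rmorphism B -> B})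
    (phi : {rmorphism A -> B}) n (b : 'I_n -> B) :
  is_diff_action actB -> (forall g a, phi (actA g a) = actB g (phi a)) ->
  dpoly_stable_ideal actA (fun p => deval phi actB b p = 0).
Proof.
move=> hB phiE; split; [split; [|split; [|split]] |].
- by rewrite devalE peval0.
- by move=> p q; rewrite !devalE peval_add => -> ->; rewrite addr0.
- by move=> p q; rewrite !devalE peval_mul => ->; rewrite mulr0.
- by move=> p q /peval_deq; rewrite !devalE => ->.
- by move=> g p; rewrite deval_dact // => ->; rewrite rmorph0.
Qed.

Definition dconst (A : comNzRingType) n (gT : finGroupType) (a : A) : dring A n gT :=
  \pi_(dring A n gT) [:: (a, monom0 n gT)].

Lemma dconst_zmod (A : comNzRingType) n (gT : finGroupType) :
  zmod_morphism (@dconst A n gT).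
Proof.
move=> a b; rewrite /dconst -pi_opp -pi_add; apply/piRP => m.
by rewrite /dadd /= !dcoef_cons !dcoef_nil /=; case: ifP; rewrite ?addr0 ?oppr0.
Qed.

Lemma dconst_monoid (A : comNzRingType) n (gT : finGroupType) :
  monoid_morphism (@dconst A n gT).
Proof. by split=> // a b; rewrite /dconst -pi_mul /dmul /= mmul0m. Qed.

HB.instance Definition _ (A : comNzRingType) n (gT : finGroupType) :=
  GRing.isZmodMorphism.Build A (dring A n gT) (@dconst A n gT) (@dconst_zmod A n gT).
HB.instance Definition _ (A : comNzRingType) n (gT : finGroupType) :=
  GRing.isMonoidMorphism.Build A (dring A n gT) (@dconst A n gT) (@dconst_monoid A n gT).

Section GenericPoint.
Variables (A : comNzRingType) (n : nat) (gT : finGroupType).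
Local Notation R := (dring A n gT).
Local Notation P := (dpoly A n gT).
Local Notation M := (monom n gT).

Definition dmon (m : M) : R := \pi_R [:: (1, m)].
Definition dvar (v : 'I_n * gT) : R := dmon [ffun w => (w == v : nat)].

Lemma dmon0 : dmon (monom0 n gT) = 1.
Proof. by []. Qed.

Lemma dmon_prod (I : Type) (s : seq I) (g : I -> M) :
  \prod_(i <- s) dmon (g i) = dmon [ffun w => \sum_(i <- s) g i w]%N.
Proof.
elim: s => [|i s IH]; rewrite ?big_nil ?big_cons.
  by rewrite -dmon0; congr dmon; apply/ffunP => w; rewrite !ffunE big_nil.
rewrite IH /dmon -pi_mul /dmul /= mulr1; congr (\pi_R [:: (_, _)]).
by apply/ffunP => w; rewrite !ffunE big_cons.
Qed.

Lemma dvar_exp v k : dvar v ^+ k = dmon [ffun w => ((w == v) * k)%N].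
Proof.
elim: k => [|k IH].
  by rewrite expr0 -dmon0; congr dmon; apply/ffunP => w; rewrite !ffunE muln0.
rewrite exprS IH /dvar /dmon -pi_mul /dmul /= mulr1; congr (\pi_R [:: (_, _)]).
by apply/ffunP => w; rewrite !ffunE mulnS; case: (w == v).
Qed.

Lemma pi_peval (q : P) : \pi_R q = peval (@dconst A n gT) dvar q.
Proof.
elim: q => [|[c m] q IH]; first by rewrite peval0.
rewrite -[_ :: q]/(dadd [:: (c, m)] q) pi_add peval_add IH peval_single.
congr (_ + _); rewrite /mev.
under eq_bigr => v _ do rewrite dvar_exp.
rewrite dmon_prod /dconst /dmon -pi_mul /dmul /= mulr1 mmul0m.
congr (\pi_R [:: (_, _)]); apply/ffunP => w.
rewrite ffunE (bigD1 w) //= ffunE eqxx mul1n big1 ?addn0 // => v /negbTE nv.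
by rewrite ffunE eq_sym nv.
Qed.
End GenericPoint.

(* Krull: an ideal missing every power of F lies in a prime ideal missing
   every power of F.  The prime is a maximal such ideal, found by Zorn. *)
Section PrimeAvoidance.
Variables (R : comNzRingType) (J : set R) (F : R).
Hypotheses (hJ : ring_ideal J) (hJF : forall k, ~ J (F ^+ k)).

Definition avoiding (U : set R) : Prop :=
  [/\ ring_ideal U, J `<=` U & forall k, ~ U (F ^+ k)].

Definition ideal_adjoin (M : set R) (z : R) : set R :=
  fun w => exists m r, M m /\ w = m + r * z.

Lemma ideal_adjoinP (M : set R) (z : R) : ring_ideal M ->
  [/\ ring_ideal (ideal_adjoin M z), M `<=` ideal_adjoin M z & ideal_adjoin M z z].
Proof.
move=> [M0 [MD MM]]; split; last 2 first.
- by move=> w Mw; exists w, 0; rewrite mul0r addr0.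
- by exists 0, 1; rewrite mul1r add0r.
split; first by exists 0, 0; rewrite mul0r addr0.
split=> [_ _ [m1 [r1 [Mm1 ->]]] [m2 [r2 [Mm2 ->]]] | r _ [m1 [r1 [Mm1 ->]]]].
  by exists (m1 + m2), (r1 + r2); rewrite mulrDl addrACA; split=> //; apply: MD.
by exists (r * m1), (r * r1); rewrite mulrDr mulrA; split=> //; apply: MM.
Qed.

Lemma chain_union_pair (C : set (set R)) x y :
  C `<=` (fun X => avoiding (J `|` X)) -> total_on C subset ->
  (J `|` \bigcup_(X in C) X) x -> (J `|` \bigcup_(X in C) X) y ->
  exists2 X, C X \/ X = set0 & (J `|` X) x /\ (J `|` X) y.
Proof.
move=> _ tot [Jx | [X CX Xx]] [Jy | [Y CY Yy]].
- by exists set0; [right | split; left].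
- by exists Y; [left | split; [left | right]].
- by exists X; [left | split; [right | left]].
case: (tot X Y CX CY) => [XY | YX].
  by exists Y; [left | split; right=> //; apply: XY].
by exists X; [left | split; right=> //; apply: YX].
Qed.

Lemma chain_union_avoiding (C : set (set R)) :
  C `<=` (fun X => avoiding (J `|` X)) -> total_on C subset ->
  avoiding (J `|` \bigcup_(X in C) X).
Proof.
move=> CP tot.
have sub X : C X \/ X = set0 -> J `|` X `<=` J `|` \bigcup_(X in C) X.
  case=> [CX | ->] w [Jw | Xw]; [by left | by right; exists X | by left | by []].
have idl X : C X \/ X = set0 -> ring_ideal (J `|` X).
  by case=> [/CP [] // | ->]; rewrite setU0.
split.
- split; first by left; case: hJ.
  split=> [x y xU yU | r x [Jx | [X CX Xx]]].
    have [X hX [Xx Xy]] := chain_union_pair CP tot xU yU.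
    have [_ [XD _]] := idl X hX.
    by apply: (sub X hX); apply: XD.
  + by left; have [_ [_ JM]] := hJ; apply: JM.
  + have [_ [_ XM]] := idl X (or_introl CX).
    by apply: (sub X (or_introl CX)); apply: XM; right.
- by move=> w Jw; left.
- move=> k [/hJF // | [X CX Xk]].
  by have [_ _ XF] := CP X CX; apply: (XF k); right.
Qed.

Lemma maximal_avoiding :
  exists M, avoiding M /\ forall U, avoiding U -> M `<=` U -> U `<=` M.
Proof.
have [A [PA Amax]] := @Zorn_bigcup R (fun X => avoiding (J `|` X))
  (fun C CP tot => chain_union_avoiding CP tot).
exists (J `|` A); split=> // U [Uideal JU UF] AU x Ux.
apply: contrapT => nAx; apply: (Amax U).
  split; first by move=> w Aw; apply: AU; right.
  by move=> UA; apply: nAx; right; apply: UA.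
by rewrite setUidr.
Qed.

Lemma prime_ideal_avoiding_powers :
  exists Pr : set R, [/\ ring_ideal Pr, J `<=` Pr, (forall k, ~ Pr (F ^+ k))
                       & forall x y, Pr (x * y) -> Pr x \/ Pr y].
Proof.
have [M [[[M0 [MD MM]] JM MF] Mmax]] := maximal_avoiding.
exists M; split=> // x y Mxy; apply: contrapT => /not_orP[nMx nMy].
have powF z : ~ M z -> exists k m r, M m /\ F ^+ k = m + r * z.
  move=> nMz; apply: contrapT => noF; apply: nMz.
  have [adj_ideal Madj adj_z] := ideal_adjoinP z (conj M0 (conj MD MM)).
  apply: (Mmax _ _ Madj) adj_z; split=> // [w /JM /Madj // | k [m [r [Mm Fk]]]].
  by apply: noF; exists k, m, r.
have [k [m1 [r1 [Mm1 e1]]]] := powF x nMx.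
have [l [m2 [r2 [Mm2 e2]]]] := powF y nMy.
apply: (MF (k + l)%N); rewrite exprD e1 e2 mulrDl !mulrDr.
apply MD; first by apply MD; [apply MM | rewrite mulrC; apply MM].
by apply MD; [apply MM | rewrite mulrACA; apply MM].
Qed.

End PrimeAvoidance.

Section ResidueField.
Variables (R : comNzRingType) (Pr : set R).
Hypotheses (hPr : ring_ideal Pr) (hP1 : ~ Pr 1)
           (hPp : forall x y, Pr (x * y) -> Pr x \/ Pr y).

Definition prime_pred : {pred R} := fun r => `[< Pr r >].

Lemma prime_pred_closed : idealr_closed prime_pred.
Proof.
case: hPr => [P0 [PD PM]]; split; [exact/asboolP | exact/asboolP |].
by move=> a u v /asboolP hu /asboolP hv; apply/asboolP/PD => //; apply: PM.
Qed.

HB.instance Definition _ := isIdealr.Build R prime_pred prime_pred_closed.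

Lemma prime_pred_prime : prime_idealr_closed prime_pred.
Proof. by move=> u v /asboolP /hPp [h | h]; apply/orP; [left | right]; apply/asboolP. Qed.

HB.instance Definition _ := isPrimeIdealrClosed.Build R prime_pred prime_pred_prime.

Local Notation D := {ideal_quot (prime_pred : idealr R)}.

(* Classically, every commutative ring has a unit-ring structure. *)
Definition dunit : {pred D} := fun x => `[< exists y, y * x = 1 >].
Definition dinv (x : D) : D :=
  if pselect (exists y, y * x = 1) is left h then projT1 (cid h) else x.

Lemma dmulVx : {in dunit, left_inverse 1 dinv *%R}.
Proof.
move=> x /asboolP hx; rewrite /dinv; case: pselect => // h.
exact: projT2 (cid h).
Qed.

Lemma dunitPl (x y : D) : y * x = 1 -> dunit x.
Proof. by move=> h; apply/asboolP; exists y. Qed.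

Lemma dinv_out : {in [predC dunit], dinv =1 id}.
Proof.
move=> x; rewrite inE /dinv => /asboolP nx.
by case: pselect => // h; case: nx.
Qed.

HB.instance Definition _ := GRing.ComNzRing_hasMulInverse.Build D dmulVx dunitPl dinv_out.

Lemma residue_integral : GRing.integral_domain_axiom D.
Proof. by move=> x y; apply: Quotient.rquot_IdomainAxiom. Qed.

HB.instance Definition _ := GRing.ComUnitRing_isIntegral.Build D residue_integral.

Definition residue_map : {rmorphism R -> {fraction D}} := (@tofrac D \o \pi_D)%FUN.

Lemma residue_map_eq0 r : residue_map r = 0 <-> Pr r.
Proof.
have e : (r \in (prime_pred : idealr R)) = (\pi_D r == 0).
  by rewrite -[r]subr0 Quotient.idealrBE subr0 -(rmorph0 (\pi_D : {rmorphism R -> D})).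
rewrite /residue_map /=; split.
- by move/eqP; rewrite tofrac_eq0 -e => /asboolP.
- by move=> h; apply/eqP; rewrite tofrac_eq0 -e; apply/asboolP.
Qed.
End ResidueField.

Lemma prime_field (R : comNzRingType) (Pr : set R) :
  ring_ideal Pr -> ~ Pr 1 -> (forall x y, Pr (x * y) -> Pr x \/ Pr y) ->
  exists (K : fieldType) (rho : {rmorphism R -> K}), forall r, rho r = 0 <-> Pr r.
Proof. by move=> h1 h2 h3; exists {fraction _}, (residue_map h1 h2 h3); apply: residue_map_eq0. Qed.

Section IdealInRing.
Variables (A : comNzRingType) (n : nat) (gT : finGroupType).
Variables (I : dpoly A n gT -> Prop) (hI : dpoly_ideal I).
Local Notation R := (dring A n gT).

Definition ring_of_ideal : set R := fun r => I (repr r).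

Lemma ring_of_idealE q : ring_of_ideal (\pi_R q) <-> I q.
Proof.
case: hI => [_ [_ [_ Ideq]]]; split; first exact/Ideq/repr_deq.
by apply/Ideq/deq_sym/repr_deq.
Qed.

Lemma ring_of_ideal_ideal : ring_ideal ring_of_ideal.
Proof.
case: hI => [I0 [ID [IM _]]]; split; first exact/ring_of_idealE.
split=> [x y | r x]; [elim/quotW: x => x; elim/quotW: y => y |
                      elim/quotW: r => r; elim/quotW: x => x].
  by rewrite -pi_add !ring_of_idealE; apply: ID.
by rewrite -pi_mul !ring_of_idealE; apply: IM.
Qed.
End IdealInRing.

Lemma field_point (A : comNzRingType) n (gT : finGroupType)
    (I : dpoly A n gT -> Prop) (f : dpoly A n gT) :
  dpoly_ideal I -> (forall k, ~ I (dexp f k)) ->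
  exists (K : fieldType) (iota : {rmorphism A -> K}) (kappa : 'I_n * gT -> K),
    (forall e, I e -> peval iota kappa e = 0) /\ peval iota kappa f != 0.
Proof.
move=> hI hf; pose R := dring A n gT; pose J := ring_of_ideal I.
have JF k : ~ J (\pi_R f ^+ k) by rewrite -pi_exp /J ring_of_idealE.
have [Pr [hPr JPr PrF hPp]] := prime_ideal_avoiding_powers (ring_of_ideal_ideal hI) JF.
have [K [rho rhoE]] : exists (K : fieldType) (rho : {rmorphism R -> K}),
    forall r, rho r = 0 <-> Pr r.
  by apply: prime_field => // P1; apply: (PrF 0%N); rewrite expr0.
exists K, (rho \o @dconst A n gT)%FUN, (rho \o @dvar A n gT)%FUN.
have rhoP q : peval (rho \o @dconst A n gT)%FUN (rho \o @dvar A n gT)%FUN q = rho (\pi_R q).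
  by rewrite pi_peval peval_comp.
split=> [e Ie | ]; rewrite rhoP.
  by apply/rhoE/JPr; rewrite /J ring_of_idealE.
by apply/eqP => /rhoE; rewrite -[\pi_R f]expr1; apply: PrF.
Qed.

Definition cofree (gT : finGroupType) (K : comNzRingType) := {ffun gT -> K}.
HB.instance Definition _ (gT : finGroupType) (K : comNzRingType) :=
  GRing.PzRing.on (cofree gT K).
HB.instance Definition _ (gT : finGroupType) (K : comNzRingType) :=
  GRing.PzSemiRing_isNonZero.Build (cofree gT K) (@ffun1_nonzero gT K 1%g).
HB.instance Definition _ (gT : finGroupType) (K : comNzRingType) :=
  GRing.PzRing_hasCommutativeMul.Build (cofree gT K) (@ffun_mulC gT K).

Section Cofree.
Variables (gT : finGroupType) (K : comNzRingType).
Local Notation B := (cofree gT K).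

Lemma cofree_sum (I : Type) (r : seq I) (F : I -> B) s :
  (\sum_(i <- r) F i) s = \sum_(i <- r) F i s.
Proof. by elim: r => [|i r IH]; rewrite ?big_nil ?big_cons ffunE ?IH. Qed.

Lemma cofree_prod (I : Type) (r : seq I) (F : I -> B) s :
  (\prod_(i <- r) F i) s = \prod_(i <- r) F i s.
Proof. by elim: r => [|i r IH]; rewrite ?big_nil ?big_cons ffunE ?IH. Qed.

Lemma cofree_exp (x : B) k s : (x ^+ k) s = x s ^+ k.
Proof. by elim: k => [|k IH]; rewrite ?expr0 ?ffunE // !exprS ffunE IH. Qed.

Definition shift (t : gT) (h : B) : B := [ffun s => h (s * t)%g].

Lemma shift_zmod t : zmod_morphism (shift t).
Proof. by move=> x y; apply/ffunP => s; rewrite !ffunE. Qed.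

Lemma shift_monoid t : monoid_morphism (shift t).
Proof. by split=> [|x y]; apply/ffunP => s; rewrite !ffunE. Qed.
End Cofree.

HB.instance Definition _ (gT : finGroupType) (K : comNzRingType) (t : gT) :=
  GRing.isZmodMorphism.Build (cofree gT K) (cofree gT K) (shift t) (@shift_zmod gT K t).
HB.instance Definition _ (gT : finGroupType) (K : comNzRingType) (t : gT) :=
  GRing.isMonoidMorphism.Build (cofree gT K) (cofree gT K) (shift t) (@shift_monoid gT K t).

Definition cofree_act (gT : finGroupType) (K : comNzRingType) (t : gT) :
  {rmorphism cofree gT K -> cofree gT K} := shift t.

Lemma cofree_action (gT : finGroupType) (K : comNzRingType) :
  is_diff_action (@cofree_act gT K).
Proof. by split=> [a | g h a]; apply/ffunP => s; rewrite /= !ffunE ?mulg1 ?mulgA. Qed.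

Lemma cofree_flat (gT : finGroupType) (K : fieldType) :
  absolutely_flat (cofree gT K).
Proof.
move=> a; exists [ffun s => (a s)^-1]; apply/ffunP => s; rewrite !ffunE.
have [-> | nz] := eqVneq (a s) 0; first by rewrite !mul0r.
by rewrite -mulrA mulfV // mulr1.
Qed.

(* ... and a nonzero stable ideal contains an indicator function, hence all
   of its translates, hence their sum 1. *)
Lemma cofree_simple (gT : finGroupType) (K : fieldType)
    (I : cofree gT K -> Prop) :
  stable_ideal (@cofree_act gT K) I -> (forall x, I x -> x = 0) \/ (forall x, I x).
Proof.
move=> [[I0 [ID IM]] Ist].
have [[x [Ix nx]] | nE] := EM (exists x, I x /\ x != 0); last first.
  by left => x Ix; apply: contrapT => nx; apply: nE; exists x; split=> //; apply/eqP.
right; have [s0 xs0] : exists s0, x s0 != 0.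
  apply: contrapT => nE; move/eqP: nx; apply; apply/ffunP => s; rewrite ffunE.
  by apply: contrapT => h; apply: nE; exists s; apply/eqP.
pose delta (s1 : gT) : cofree gT K := [ffun s => (s == s1)%:R].
have delta0 : I (delta s0).
  have -> : delta s0 = [ffun s => (s == s0)%:R * (x s0)^-1] * x.
    apply/ffunP => s; rewrite !ffunE; case: eqP => [-> | _]; last by rewrite !mul0r.
    by rewrite mul1r mulVf.
  exact: IM.
have deltaI s1 : I (delta s1).
  have -> : delta s1 = cofree_act K (s1^-1 * s0)%g (delta s0).
    apply/ffunP => s; rewrite /= !ffunE mulgA -{2}[s0]mul1g (inj_eq (mulIg s0)).
    by rewrite -eq_mulgV1.
  exact: Ist.
have I1 : I 1.
  have -> : (1 : cofree gT K) = \sum_(s1 : gT) delta s1.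
    apply/ffunP => s; rewrite cofree_sum ffunE (bigD1 s) //= ffunE eqxx big1 ?addr0 //.
    by move=> s1 /negbTE ns; rewrite ffunE eq_sym ns.
  by apply: big_ind.
by move=> y; rewrite -[y]mulr1; apply: IM.
Qed.

Lemma cofree_pseudofield (gT : finGroupType) (K : fieldType) :
  pseudofield (@cofree_act gT K).
Proof. by split; [apply: cofree_flat | apply: cofree_simple]. Qed.

Section CofreeEmbedding.
Variables (A : comNzRingType) (gT : finGroupType) (K : comNzRingType).
Variables (actA : gT -> {rmorphism A -> A}) (iota : {rmorphism A -> K}).

Definition twist (a : A) : cofree gT K := [ffun s => iota (actA s a)].

Lemma twist_zmod : zmod_morphism twist.
Proof. by move=> x y; apply/ffunP => s; rewrite !ffunE !rmorphB. Qed.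

Lemma twist_monoid : monoid_morphism twist.
Proof. by split=> [|x y]; apply/ffunP => s; rewrite !ffunE ?rmorph1 ?rmorphM. Qed.
End CofreeEmbedding.

HB.instance Definition _ (A : comNzRingType) (gT : finGroupType) (K : comNzRingType)
    (actA : gT -> {rmorphism A -> A}) (iota : {rmorphism A -> K}) :=
  GRing.isZmodMorphism.Build A (cofree gT K) (twist actA iota) (twist_zmod actA iota).
HB.instance Definition _ (A : comNzRingType) (gT : finGroupType) (K : comNzRingType)
    (actA : gT -> {rmorphism A -> A}) (iota : {rmorphism A -> K}) :=
  GRing.isMonoidMorphism.Build A (cofree gT K) (twist actA iota) (twist_monoid actA iota).

Lemma twist_equivariant (A : comNzRingType) (gT : finGroupType) (K : comNzRingType)
    (actA : gT -> {rmorphism A -> A}) (iota : {rmorphism A -> K}) :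
  is_diff_action actA ->
  forall g a, twist actA iota (actA g a) = cofree_act K g (twist actA iota a).
Proof. by move=> [_ actAM] g a; apply/ffunP => s; rewrite /= !ffunE actAM. Qed.

Lemma dact1 (A : comNzRingType) n (gT : finGroupType) (actA : gT -> {rmorphism A -> A})
    (p : dpoly A n gT) : is_diff_action actA -> dact actA 1%g p = p.
Proof.
move=> [act1 _]; elim: p => [|[c m] p IH] //=; rewrite IH act1.
by congr ((_, _) :: _); apply/ffunP => -[i s]; rewrite ffunE /= invg1 mul1g.
Qed.

Lemma deval_twist (A : comNzRingType) n (gT : finGroupType) (K : comNzRingType)
    (actA : gT -> {rmorphism A -> A}) (iota : {rmorphism A -> K})
    (kappa : 'I_n * gT -> K) (p : dpoly A n gT) (s : gT) :
  deval (twist actA iota) (@cofree_act gT K) (fun i => [ffun s => kappa (i, s)]) p s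
  = peval iota kappa (dact actA s p).
Proof.
rewrite /deval cofree_sum /peval /dact big_map; apply: eq_bigr => t _ /=.
rewrite ffunE cofree_prod ffunE /mev; congr (_ * _).
rewrite [RHS](reindex_inj (h := fun v : 'I_n * gT => (v.1, (s * v.2)%g))).
  by apply: eq_bigr => -[i r] _ /=; rewrite cofree_exp /= !ffunE /= mulKg.
by move=> [i a] [j r] /= [-> /mulgI ->].
Qed.

(* Every difference morphism out of a pseudofield into a nonzero ring is
   injective: its kernel is a proper stable ideal. *)
Lemma pseudofield_morph_inj (gT : finGroupType) (A B : comNzRingType)
    (actA : gT -> {rmorphism A -> A}) (actB : gT -> {rmorphism B -> B})
    (phi : {rmorphism A -> B}) :
  pseudofield actA -> (forall g a, phi (actA g a) = actB g (phi a)) ->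
  injective phi.
Proof.
move=> [_ simpleA] phiE.
have ker_stable : stable_ideal actA (fun a => phi a = 0).
  split; first split; [by rewrite rmorph0 | split |].
  - by move=> x y; rewrite rmorphD => -> ->; rewrite addr0.
  - by move=> r x; rewrite rmorphM => ->; rewrite mulr0.
  - by move=> g x; rewrite phiE => ->; rewrite rmorph0.
have ker0 a : phi a = 0 -> a = 0.
  case: (simpleA _ ker_stable) => [ker0 | all]; first exact: ker0.
  by move: (all 1); rewrite rmorph1 => /eqP; rewrite oner_eq0.
by move=> a b eab; apply/eqP; rewrite -subr_eq0; apply/eqP/ker0; rewrite rmorphB eab subrr.
Qed.

Lemma separating_point (gT : finGroupType) (A : comNzRingType)
    (actA : gT -> {rmorphism A -> A}) n (I : dpoly A n gT -> Prop) (f : dpoly A n gT) :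
  is_diff_action actA -> pseudofield actA ->
  dpoly_stable_ideal actA I -> (forall k, ~ I (dexp f k)) ->
  exists (B : comNzRingType) (actB : gT -> {rmorphism B -> B})
         (phi : {rmorphism A -> B}) (b : 'I_n -> B),
    [/\ is_diff_action actB, pseudofield actB, contains actA actB phi,
        forall e, I e -> deval phi actB b e = 0 & deval phi actB b f != 0].
Proof.
move=> hact hA [hI Ist] hf.
have [K [iota [kappa [Izero fnz]]]] := field_point hI hf.
have phiE := twist_equivariant iota hact.
exists (cofree gT K), (@cofree_act gT K), (twist actA iota),
  (fun i => [ffun s => kappa (i, s)]).
split; [exact: cofree_action | exact: cofree_pseudofield | | |].
- by split=> //; apply: pseudofield_morph_inj phiE.
- by move=> e Ie; apply/ffunP => s; rewrite deval_twist ffunE Izero //; apply: Ist.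
- apply/eqP => /(congr1 (fun h : cofree gT K => h 1%g)).
  by rewrite deval_twist dact1 // ffunE; apply/eqP.
Qed.

Lemma prod_pair (R : comNzRingType) (I J : finType) (F : I * J -> R) :
  \prod_(v : I * J) F v = \prod_(i : I) \prod_(j : J) F (i, j).
Proof. by rewrite pair_big /=; apply: eq_bigr => -[i j]. Qed.

Section Lift.
Variables (A : comNzRingType) (n k : nat) (gT : finGroupType).

Definition liftm (mo : monom n gT) : monom (n + k) gT :=
  [ffun v : 'I_(n + k) * gT =>
     if split v.1 is inl i then mo (i, v.2) else 0%N].

Definition liftp (p : dpoly A n gT) : dpoly A (n + k) gT :=
  [seq (t.1, liftm t.2) | t <- p].

Lemma deval_liftp (B : comNzRingType) (phi : A -> B) (actB : gT -> {rmorphism B -> B})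
    (b : 'I_(n + k) -> B) (p : dpoly A n gT) :
  deval phi actB b (liftp p) = deval phi actB (fun i => b (lshift k i)) p.
Proof.
rewrite /deval /liftp big_map; apply: eq_bigr => t _ /=; congr (_ * _).
rewrite !prod_pair.
rewrite big_split_ord /= [X in _ * X]big1 ?mulr1.
  apply: eq_bigr => i _; apply: eq_bigr => s _.
  by rewrite ffunE /= (unsplitK (inl i)).
by move=> j _; apply: big1 => s _; rewrite ffunE /= (unsplitK (inr j)) expr0.
Qed.
End Lift.
Arguments liftp {A n} k {gT} p.

(* Elimination of an inequation w <> 0, in the spirit of Rabinowitsch:
   with one new indeterminate z_s for each s in Sigma, w(b) <> 0 in a
   pseudofield amounts to the solvability of sum_s z_s * s(w) = 1. *)
Section Inequations.
Variables (gT : finGroupType) (A : comNzRingType) (actA : gT -> {rmorphism A -> A}).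
Local Notation m := #|gT|.

(* The indeterminate z_s, i.e. y_(n + rank s). *)
Definition zvar n (s : gT) : monom (n + m) gT :=
  [ffun v => (v == (rshift n (enum_rank s), 1%g) : nat)].

Definition inverse_poly n (w : dpoly A n gT) : dpoly A (n + m) gT :=
  dadd (dsum [seq dmul [:: (1, zvar n s)] (liftp m (dact actA s w)) | s <- enum gT])
       [:: (-1, monom0 (n + m) gT)].

Lemma mev_zvar (B : comNzRingType) n (x : 'I_(n + m) * gT -> B) s :
  mev x (zvar n s) = x (rshift n (enum_rank s), 1%g).
Proof.
rewrite /mev (bigD1 (rshift n (enum_rank s), 1%g)) //= ffunE eqxx expr1.
by rewrite big1 ?mulr1 // => v /negbTE nv; rewrite ffunE nv expr0.
Qed.

Lemma deval_inverse_poly (B : comNzRingType) (phi : {rmorphism A -> B})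
    (actB : gT -> {rmorphism B -> B}) n (b : 'I_(n + m) -> B) (w : dpoly A n gT) :
  is_diff_action actB -> (forall g a, phi (actA g a) = actB g (phi a)) ->
  deval phi actB b (inverse_poly w) =
  \sum_(s : gT) b (rshift n (enum_rank s)) *
                actB s (deval phi actB (fun i => b (lshift m i)) w) - 1.
Proof.
move=> hB phiE; rewrite devalE peval_add peval_dsum big_map big_enum /=.
congr (_ + _); last by rewrite peval_single rmorphN1 mev0 mulr1.
apply: eq_bigr => s _; rewrite peval_mul peval_single rmorph1 mul1r mev_zvar /=.
by rewrite hB.1 -devalE deval_liftp deval_dact.
Qed.

Lemma pseudofield_unit_combination (B : comNzRingType)
    (actB : gT -> {rmorphism B -> B}) (x : B) :
  is_diff_action actB -> pseudofield actB -> x != 0 ->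
  exists c : gT -> B, \sum_(s : gT) c s * actB s x = 1.
Proof.
move=> [act1 actM] [_ simpleB] nx.
pose Jx (y : B) := exists c : gT -> B, y = \sum_(s : gT) c s * actB s x.
have Jx_stable : stable_ideal actB Jx.
  split; first split; [ | split | ].
  - by exists (fun _ => 0); rewrite big1 // => s _; rewrite mul0r.
  - move=> y z [c1 ->] [c2 ->]; exists (fun s => c1 s + c2 s).
    by rewrite -big_split; apply: eq_bigr => s _; rewrite mulrDl.
  - move=> r y [c ->]; exists (fun s => r * c s).
    by rewrite big_distrr; apply: eq_bigr => s _ /=; rewrite mulrA.
  - move=> g y [c ->]; exists (fun s => actB g (c (g^-1 * s)%g)).
    rewrite rmorph_sum (reindex_inj (h := fun s => (g^-1 * s)%g)) /=; last exact: mulgI.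
    by apply: eq_bigr => s _; rewrite rmorphM -actM mulVKg.
case: (simpleB Jx Jx_stable) => [Jx0 | Jx_all]; last first.
  by have [c c1] := Jx_all 1; exists c.
case/eqP: nx; apply: Jx0; exists (fun s => (s == 1%g)%:R).
rewrite (bigD1 1%g) //= eqxx mul1r act1 big1 ?addr0 // => s /negbTE ->.
by rewrite mul0r.
Qed.

Lemma inverse_poly_zero (B : comNzRingType) (phi : {rmorphism A -> B})
    (actB : gT -> {rmorphism B -> B}) n (b : 'I_n -> B) (w : dpoly A n gT) :
  is_diff_action actB -> pseudofield actB ->
  (forall g a, phi (actA g a) = actB g (phi a)) -> deval phi actB b w != 0 ->
  exists b' : 'I_(n + m) -> B,
    (fun i => b' (lshift m i)) = b /\ deval phi actB b' (inverse_poly w) = 0.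
Proof.
move=> hB pB phiE wb; have [c hc] := pseudofield_unit_combination hB pB wb.
pose b' (k : 'I_(n + m)) :=
  match split k with inl i => b i | inr j => c (enum_val j) end.
have b'l : (fun i => b' (lshift m i)) = b.
  by apply: funext => i; rewrite /b' (unsplitK (inl i)).
exists b'; split=> //; rewrite deval_inverse_poly // b'l.
apply/eqP; rewrite subr_eq0 -hc; apply/eqP/eq_bigr => s _.
by rewrite /b' (unsplitK (inr _)) enum_rankK.
Qed.

Lemma inverse_poly_nonzero (B : comNzRingType) (phi : {rmorphism A -> B})
    (actB : gT -> {rmorphism B -> B}) n (b : 'I_(n + m) -> B) (w : dpoly A n gT) :
  is_diff_action actB -> (forall g a, phi (actA g a) = actB g (phi a)) ->
  deval phi actB b (inverse_poly w) = 0 ->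
  deval phi actB (fun i => b (lshift m i)) w != 0.
Proof.
move=> hB phiE; rewrite deval_inverse_poly // => inv0; apply/eqP => w0.
move: inv0; rewrite w0 big1 => [|s _]; last by rewrite rmorph0 mulr0.
by rewrite sub0r => /eqP; rewrite oppr_eq0 oner_eq0.
Qed.
End Inequations.

Definition zero_transfer (gT : finGroupType) (A : comNzRingType)
    (actA : gT -> {rmorphism A -> A}) : Prop :=
  forall (n : nat) (E : dpoly A n gT -> Prop),
    (exists (B : comNzRingType) (actB : gT -> {rmorphism B -> B})
            (phi : {rmorphism A -> B}) (b : 'I_n -> B),
       [/\ is_diff_action actB, pseudofield actB, contains actA actB phi &
           forall e, E e -> deval phi actB b e = 0]) ->
    exists a : 'I_n -> A, forall e, E e -> deval id actA a e = 0.

Definition zero_nonzero_transfer (gT : finGroupType) (A : comNzRingType)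
    (actA : gT -> {rmorphism A -> A}) : Prop :=
  forall (n : nat) (E : dpoly A n gT -> Prop) (W : seq (dpoly A n gT)),
    (exists (B : comNzRingType) (actB : gT -> {rmorphism B -> B})
            (phi : {rmorphism A -> B}) (b : 'I_n -> B),
       [/\ is_diff_action actB, pseudofield actB, contains actA actB phi,
           forall e, E e -> deval phi actB b e = 0 &
           forall w, w \in W -> deval phi actB b w != 0]) ->
    exists a : 'I_n -> A,
      (forall e, E e -> deval id actA a e = 0) /\
      (forall w, w \in W -> deval id actA a w != 0).

Lemma absolutely_flat_reduced (A : comNzRingType) (x : A) k :
  absolutely_flat A -> x ^+ k = 0 -> x = 0.
Proof.
move=> flat; have [y xxy] := flat x.
elim: k => [|k IH]; first by rewrite expr0 => /eqP; rewrite oner_eq0.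
case: k IH => [|k] IH; first by rewrite expr1.
move=> xk0; apply: IH.
have -> : x ^+ k.+1 = x ^+ k.+2 * y.
  by rewrite [in RHS]exprSr [in RHS]exprSr -!mulrA (mulrA x x y) -xxy -exprSr.
by rewrite xk0 mul0r.
Qed.

(* (1) => (2): apply the Nullstellensatz to the vanishing ideal of the
   extension point and to the polynomial 1. *)
Lemma diff_closed_zero_transfer (gT : finGroupType) (A : comNzRingType)
    (actA : gT -> {rmorphism A -> A}) :
  difference_closed actA -> zero_transfer actA.
Proof.
move=> closedA n E [B [actB [phi [b [hB _ [_ phiE] Eb]]]]].
have [_ radical] := closedA n _ (vanishing_ideal_stable b hB phiE) (done_ A n gT).
apply: contrapT => noZero.
have [k] : exists k, deval phi actB b (dexp (done_ A n gT) k) = 0.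
  apply: radical => a aZ; apply: contrapT => a1; apply: noZero.
  by exists a => e Ee; apply: aZ; apply: Eb.
by rewrite devalE peval_exp peval_single rmorph1 mev0 mulr1 expr1n => /eqP; rewrite oner_eq0.
Qed.

(* (2) => (3): eliminate the inequations one at a time with inverse_poly. *)
Lemma zero_transfer_nonzero (gT : finGroupType) (A : comNzRingType)
    (actA : gT -> {rmorphism A -> A}) :
  is_diff_action actA -> zero_transfer actA -> zero_nonzero_transfer actA.
Proof.
move=> hact transfer n E W; move: (erefl (size W)); move: {2}(size W) => k.
elim: k n E W => [|k IH] n E [|w W]; [move=> _ | by [] | by [] | move=> [sizeW]].
  move=> [B [actB [phi [b [hB pB cB Eb _]]]]].
  have [|a aE] := transfer n E; first by exists B, actB, phi, b.
  by exists a; split=> // w; rewrite in_nil.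
move=> [B [actB [phi [b [hB pB [phi_inj phiE] Eb Wb]]]]].
have [b' [b'l b'w]] := inverse_poly_zero hB pB phiE (Wb w (mem_head _ _)).
pose E' e' := (exists2 e, E e & e' = liftp #|gT| e) \/ e' = inverse_poly actA w.
have [|a' [a'E a'W]] := IH _ E' (map (liftp #|gT|) W) (etrans (size_map _ _) sizeW).
  exists B, actB, phi, b'.
  split=> // [e' [[e Ee ->] | ->] | w' /mapP[w0 w0W ->]] //.
    by rewrite deval_liftp b'l; apply: Eb.
  by rewrite deval_liftp b'l; apply: Wb; rewrite inE w0W orbT.
exists (fun i => a' (lshift #|gT| i)); split.
  by move=> e Ee; rewrite -deval_liftp; apply: a'E; left; exists e.
move=> w0; rewrite inE => /predU1P[-> | w0W]; last first.
  by rewrite -deval_liftp; apply: a'W; apply: map_f.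
rewrite deval_idE; apply: inverse_poly_nonzero (hact) _ _ => //.
by rewrite -deval_idE; apply: a'E; right.
Qed.

(* (3) => (1): the radical is contained in the vanishing ideal since A is
   reduced; conversely, if no power of f lies in the ideal, a separating
   point in a pseudofield extension descends to A. *)
Lemma zero_nonzero_transfer_diff_closed (gT : finGroupType) (A : comNzRingType)
    (actA : gT -> {rmorphism A -> A}) :
  is_diff_action actA -> pseudofield actA ->
  zero_nonzero_transfer actA -> difference_closed actA.
Proof.
move=> hact hA transfer n I hI f; split.
  move=> [k Ifk] a aI; have := aI _ Ifk.
  rewrite deval_idE devalE peval_exp -devalE -deval_idE.
  by apply: absolutely_flat_reduced; case: hA.
move=> fvanish; apply: contrapT => noPow.
have noPow' k : ~ I (dexp f k) by move=> Ifk; apply: noPow; exists k.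
have [B [actB [phi [b [hB pB cB Ib fb]]]]] := separating_point hact hA hI noPow'.
have [|a [aI af]] := transfer n I [:: f].
  by exists B, actB, phi, b; split=> // w; rewrite inE => /eqP ->.
by move/eqP: (af f (mem_head _ _)); apply; apply: fvanish.
Qed.

Theorem mainTheorem12 (gT : finGroupType) (A : comNzRingType)
  (actA : gT -> {rmorphism A -> A})
  (hact : is_diff_action actA) (hA : pseudofield actA) :
  (difference_closed actA <->
       (forall (n : nat) (E : dpoly A n gT -> Prop),
          (exists (B : comNzRingType) (actB : gT -> {rmorphism B -> B})
                  (phi : {rmorphism A -> B}) (b : 'I_n -> B),
             [/\ is_diff_action actB, pseudofield actB, contains actA actB phi &
                 forall e, E e -> deval phi actB b e = 0]) ->
          exists a : 'I_n -> A, forall e, E e -> deval id actA a e = 0))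
  /\ (difference_closed actA <->
       (forall (n : nat) (E : dpoly A n gT -> Prop) (W : seq (dpoly A n gT)),
          (exists (B : comNzRingType) (actB : gT -> {rmorphism B -> B})
                  (phi : {rmorphism A -> B}) (b : 'I_n -> B),
             [/\ is_diff_action actB, pseudofield actB, contains actA actB phi,
                 forall e, E e -> deval phi actB b e = 0 &
                 forall w, w \in W -> deval phi actB b w != 0]) ->
          exists a : 'I_n -> A,
            (forall e, E e -> deval id actA a e = 0) /\
            (forall w, w \in W -> deval id actA a w != 0))).
Proof.
have one_two := @diff_closed_zero_transfer gT A actA.
have two_three := zero_transfer_nonzero hact.
have three_one := zero_nonzero_transfer_diff_closed hact hA.
split; split.
- exact: one_two.
- by move=> /two_three /three_one.
- by move=> /one_two /two_three.
- exact: three_one.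
Qed.
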